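(* Let $(X_m)_{m\in\mathbb Z}$ be a homogeneous second order recurrence sequence with constant coefficients. For integers $a,b,c,d,e$ put $$\Delta=X_{d-a}X_{e-b}-X_{e-a}X_{d-b},\quad \Delta_1=X_{d-c}X_{e-b}-X_{e-c}X_{d-b},\quad \Delta_2=X_{d-a}X_{e-c}-X_{e-a}X_{d-c}.$$ Let $k,m$ be integers. Provided every denominator appearing below is nonzero and, when $k<0$, the base of every power $(\cdot)^r$ or $(\cdot)^k$ appearing is nonzero, the following hold: $$\sum_{r=0}^k\left(\frac{\Delta}{\Delta_1}\right)^rX_{m-k(a-c)-b+c+(a-c)r}=\frac{\Delta}{\Delta_2}\left(\frac{\Delta}{\Delta_1}\right)^kX_m-\frac{\Delta_1}{\Delta_2}X_{m-(k+1)(a-c)},$$ $$\sum_{r=0}^k\left(\frac{\Delta}{\Delta_2}\right)^rX_{m-k(b-c)-a+c+(b-c)r}=\frac{\Delta}{\Delta_1}\left(\frac{\Delta}{\Delta_2}\right)^kX_m-\frac{\Delta_2}{\Delta_1}X_{m-(k+1)(b-c)},$$ $$\sum_{r=0}^k\left(\frac{-\Delta_2}{\Delta_1}\right)^rX_{m-k(a-b)+b-c+(a-b)r}=\frac{\Delta_2}{\Delta}\left(\frac{-\Delta_2}{\Delta_1}\right)^kX_m+\frac{\Delta_1}{\Delta}X_{m-(k+1)(a-b)}.$$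
   Context: A homogeneous second order recurrence sequence with constant coefficients is a sequence $(X_m)_{m\in\mathbb Z}$ of complex numbers for which there are constants $p,q\in\mathbb C$, $q\neq 0$, with $X_m=pX_{m-1}+qX_{m-2}$ for all $m\in\mathbb Z$. Summation convention: for an integer $k<0$, $\sum_{r=0}^k f_r$ means $-\sum_{r=k+1}^{-1} f_r$ (in particular it equals $0$ when $k=-1$). *)

(* The ambient field of the paper is C; we state the result
   for an arbitrary field F (a generalization; C is such a field). *)
From HB Require Import structures.
From mathcomp Require Import all_boot all_order all_algebra.
Set Implicit Arguments. Unset Strict Implicit. Unset Printing Implicit Defensive.
Import Order.TTheory GRing.Theory Num.Theory.
Local Open Scope ring_scope.

Definition is_rec2 (F : fieldType) (X : int -> F) (p q : F) : Prop :=
  q != 0 /\ forall m : int, X m = p * X (m - 1) + q * X (m - 2).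

(* Summation convention: for k >= 0, sum_{r=0}^k f r;
   for k < 0, - sum_{r=k+1}^{-1} f r  (so k = -1 gives 0). *)
Definition sumZ (F : fieldType) (k : int) (f : int -> F) : F :=
  match k with
  | Posz n => \sum_(i < n.+1) f (Posz i)
  | Negz n => (* k = -(n+1); r ranges over -n, ..., -1 *)
      - \sum_(i < n) f (- (Posz i.+1))
  end.

Definition Delta (F : fieldType) (X : int -> F) (a b d e : int) : F :=
  X (d - a) * X (e - b) - X (e - a) * X (d - b).
Definition Delta1 (F : fieldType) (X : int -> F) (a b c d e : int) : F :=
  X (d - c) * X (e - b) - X (e - c) * X (d - b).
Definition Delta2 (F : fieldType) (X : int -> F) (a b c d e : int) : F :=
  X (d - a) * X (e - c) - X (e - a) * X (d - c).

(* The three-term identity  Delta X_{n-c} = Delta_1 X_{n-a} + Delta_2 X_{n-b}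
   holds for every n: its defect is the 3x3 determinant det (X_{i-j}) with rows
   i = n, d, e and columns j = a, b, c, which satisfies the recurrence in each
   row and vanishes when two rows coincide, hence vanishes identically since a
   solution is determined by two consecutive values.  Solved for X_{n-b}, the
   identity writes each summand of the first formula as
   rho^r (A Y_{k-r} - B Y_{k-r+1}) with rho = Delta/Delta_1,
   Y_j = X_{m-j(a-c)} and B rho = A, so the sum telescopes.  The other two
   formulas are the first one for the triples (b, a, c) and (a, c, b), because
   the minors Delta are antisymmetric in their first two indices. *)

From HB Require Import structures.
From mathcomp Require Import all_boot all_order all_algebra.
From mathcomp Require Import ring zify.
Import Order.TTheory GRing.Theory Num.Theory.
Set Implicit Arguments. Unset Strict Implicit.
Local Open Scope ring_scope.

Section Recurrence.
Variables (F : fieldType) (p q : F).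

Lemma rec2_eq0 (Y : int -> F) (j : int) :
  is_rec2 Y p q -> Y j = 0 -> Y (j + 1) = 0 -> forall n, Y n = 0.
Proof.
move=> [qnz hY] Yj Yj1.
have rec_step i : Y (i + 2) = p * Y (i + 1) + q * Y i.
  by rewrite hY; congr (_ * Y _ + _ * Y _); ring.
suff pair_eq0 i : Y (j + i) = 0 /\ Y (j + i + 1) = 0.
  by move=> n; have [] := pair_eq0 (n - j); rewrite addrC subrK.
elim/int_ind: i => [|i [Y0 Y1]|i [Y0 Y1]]; first by rewrite addr0.
- have -> : j + i.+1 = j + i + 1 by lia.
  split=> //; have -> : j + i + 1 + 1 = j + i + 2 by lia.
  by rewrite rec_step Y0 Y1 !mulr0 addr0.
- have -> : j - i.+1%:Z + 1 = j - i%:Z by lia.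
  split=> //; apply: (mulfI qnz); rewrite mulr0.
  have := rec_step (j - i.+1%:Z); have -> : j - i.+1%:Z + 2 = j - i%:Z + 1 by lia.
  have -> : j - i.+1%:Z + 1 = j - i%:Z by lia.
  by rewrite Y0 Y1 mulr0 add0r => <-.
Qed.

End Recurrence.

Section SumZ.
Variable F : fieldType.

Lemma eq_sumZ (k : int) (f g : int -> F) :
  (forall r, (0 <= r <= k) || (k < r < 0) -> f r = g r) -> sumZ k f = sumZ k g.
Proof.
case: k => n efg /=; last congr (- _); apply: eq_bigr => i _; apply: efg;
  have := ltn_ord i; lia.
Qed.

Lemma sumZ_telescope (k : int) (h : int -> F) :
  sumZ k (fun r => h r - h (r - 1)) = h k - h (-1).
Proof.
case: k => n /=.
  rewrite -(big_mkord xpredT (fun i => h i - h (i%:Z - 1))).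
  rewrite (telescope_sumr_eq (fun i : nat => h (i%:Z - 1))) //.
    by congr (h _ - h _); lia.
  by move=> i _; congr (h _ - h _); lia.
rewrite -(big_mkord xpredT (fun i => h (- i.+1%:Z) - h (- i.+1%:Z - 1))).
rewrite (telescope_sumr_eq (fun i : nat => - h (- i%:Z - 1))) //.
  by rewrite opprB opprK addrC; congr (h _ - h _); lia.
by move=> i _; rewrite opprK [RHS]addrC; congr (h _ - h _); lia.
Qed.

Lemma exprzS_mulr (x : F) (r : int) : 0 <= r \/ x != 0 -> x ^ (r + 1) = x ^ r * x.
Proof.
by case=> [r_ge0 | x_neq0]; [rewrite exprzD_ss ?r_ge0 | rewrite expfzDr].
Qed.

Lemma sumZ_geom_telescope (A B rho : F) (Y : int -> F) (k : int) :
  B * rho = A -> (k < 0 -> rho != 0) ->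
  sumZ k (fun r => rho ^ r * (A * Y (k - r) - B * Y (k - r + 1)))
  = A * rho ^ k * Y 0 - B * Y (k + 1).
Proof.
move=> BrhoA k_lt0_rho.
have rho_cond r : (0 <= r <= k) || (k < r < 0) -> 0 <= r \/ rho != 0.
  by case: (lerP 0 r) => [|r_lt0]; [left | right; apply: k_lt0_rho; lia].
(* Not rho^r * A * Y (k - r): with the junk value 0 ^ -1 = 0 that choice would
   break at r = 0 when rho = 0. *)
pose h r := B * rho ^ (r + 1) * Y (k - r).
rewrite (eq_sumZ (g := fun r => h r - h (r - 1))).
  have rho_k : 0 <= k \/ rho != 0.
    by case: (lerP 0 k) => [|/k_lt0_rho]; [left | right].
  rewrite sumZ_telescope /h subrr opprK addNr expr0z mulr1.
  by rewrite (exprzS_mulr rho_k) -BrhoA; ring.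
move=> r /rho_cond r_cond; rewrite /h subrK (exprzS_mulr r_cond) -BrhoA.
have -> : k - (r - 1) = k - r + 1 by lia.
ring.
Qed.

End SumZ.

Section DeltaIdentity.
Variables (F : fieldType) (X : int -> F) (p q : F) (a b c : int).
Hypothesis recX : is_rec2 X p q.

Lemma rec2_shift (t s : int) : X (t - s) = p * X (t - 1 - s) + q * X (t - 2 - s).
Proof. by rewrite recX.2; congr (_ * X _ + _ * X _); ring. Qed.

(* det [:: X (n - a), X (n - b), X (n - c); same for d; same for e],
   expanded along the first row. *)
Definition det3 (n d e : int) : F :=
  Delta X a b d e * X (n - c) - Delta X c b d e * X (n - a)
  - Delta X a c d e * X (n - b).

Lemma det3_swap n d e : det3 n e d = - det3 n d e.
Proof. by rewrite /det3 /Delta; ring. Qed.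

Lemma det3_rec n d e : det3 n d e = p * det3 n d (e - 1) + q * det3 n d (e - 2).
Proof. by rewrite /det3 /Delta !(rec2_shift e); ring. Qed.

Lemma det3_eq0 n d e : det3 n d e = 0.
Proof.
have rec_row3 d' : is_rec2 (det3 n d') p q.
  by split; [exact: recX.1 | exact: det3_rec].
have rec_row2 e' : is_rec2 (det3 n ^~ e') p q.
  split=> [|d']; first exact: recX.1.
  by rewrite !(det3_swap n e') det3_rec; ring.
apply: (rec2_eq0 (rec_row2 e) (j := n)); first by rewrite /det3 /Delta; ring.
by apply: (rec2_eq0 (rec_row3 _) (j := n)); rewrite /det3 /Delta; ring.
Qed.

Lemma Delta_rec_identity n d e :
  Delta X a b d e * X (n - c)
  = Delta X c b d e * X (n - a) + Delta X a c d e * X (n - b).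
Proof. by apply/subr0_eq; rewrite -[RHS](det3_eq0 n d e) /det3; ring. Qed.

Lemma Delta_antisym (s t d e : int) : Delta X s t d e = - Delta X t s d e.
Proof. by rewrite /Delta; ring. Qed.

Section Summation.
Variables d e : int.
Local Notation D := (Delta X a b d e).
Local Notation D1 := (Delta X c b d e).
Local Notation D2 := (Delta X a c d e).

Lemma sumZ_Delta_geom (k m : int) :
  D1 != 0 -> D2 != 0 -> (k < 0 -> D / D1 != 0) ->
  sumZ k (fun r => (D / D1) ^ r * X (m - k * (a - c) - b + c + (a - c) * r))
  = D / D2 * (D / D1) ^ k * X m - D1 / D2 * X (m - (k + 1) * (a - c)).
Proof.
move=> D1nz D2nz k_lt0_nz.
have solve_b n : X (n - b) = D / D2 * X (n - c) - D1 / D2 * X (n - a).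
  rewrite -[X (n - b)](mulKf D2nz) -(addKr (D1 * X (n - a)) (D2 * _)).
  by rewrite -Delta_rec_identity; field.
pose Y j := X (m - j * (a - c)).
rewrite (eq_sumZ (g := fun r =>
  (D / D1) ^ r * (D / D2 * Y (k - r) - D1 / D2 * Y (k - r + 1)))).
  rewrite sumZ_geom_telescope //; first by rewrite /Y mul0r subr0.
  by field; apply/andP.
move=> r _; congr (_ * _).
have -> : m - k * (a - c) - b + c + (a - c) * r
          = (m - k * (a - c) + c + (a - c) * r) - b by ring.
by rewrite solve_b /Y; congr (_ * X _ - _ * X _); ring.
Qed.

End Summation.
End DeltaIdentity.

Theorem lemma5 (F : fieldType) (X : int -> F) (p q : F) (a b c d e k m : int) :
  is_rec2 X p q ->
  let D := Delta X a b d e in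
  let D1 := Delta1 X a b c d e in
  let D2 := Delta2 X a b c d e in
  [/\ (D1 != 0 -> D2 != 0 -> (k < 0 -> D / D1 != 0) ->
        sumZ k (fun r => (D / D1) ^ r * X (m - k * (a - c) - b + c + (a - c) * r))
        = D / D2 * (D / D1) ^ k * X m - D1 / D2 * X (m - (k + 1) * (a - c))),
      (D1 != 0 -> D2 != 0 -> (k < 0 -> D / D2 != 0) ->
        sumZ k (fun r => (D / D2) ^ r * X (m - k * (b - c) - a + c + (b - c) * r))
        = D / D1 * (D / D2) ^ k * X m - D2 / D1 * X (m - (k + 1) * (b - c)))
    & (D1 != 0 -> D != 0 -> (k < 0 -> - D2 / D1 != 0) ->
        sumZ k (fun r => (- D2 / D1) ^ r * X (m - k * (a - b) + b - c + (a - b) * r))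
        = D2 / D * (- D2 / D1) ^ k * X m + D1 / D * X (m - (k + 1) * (a - b)))].
Proof.
move=> recX D D1 D2; split.
- exact: (sumZ_Delta_geom recX (c := c) (d := d) (e := e) (k := k) m).
- move=> D1nz D2nz k_lt0_nz.
  have := sumZ_Delta_geom recX (a := b) (b := a) (c := c) (d := d) (e := e) (k := k) m.
  rewrite (Delta_antisym _ b a) (Delta_antisym _ c a) (Delta_antisym _ b c).
  by rewrite !oppr_eq0 !invrN !mulrNN; apply.
- move=> D1nz Dnz k_lt0_nz.
  have := sumZ_Delta_geom recX (a := a) (b := c) (c := b) (d := d) (e := e) (k := k) m.
  rewrite (Delta_antisym _ b c) oppr_eq0 invrN mulrN -mulNr.
  under eq_sumZ => r _ do rewrite (addrAC (m - k * (a - b)) (- c)).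
  by move=> /(_ D1nz Dnz k_lt0_nz) ->; congr (_ + _); rewrite !mulNr opprK.
Qed.
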